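(* Let $n,m\ge 1$, $Q=\{1,\dots,n\}$ and $D=\{1,\dots,m\}$. Consider any MCT circuit $(g_1,\dots,g_m)$ on qubits $Q$ (as defined in the context) to which at least one of Swap 1, Swap 2, Swap 3 applies. Then, by applying Swap 1, Swap 2 and Swap 3 repeatedly (finitely many times), this circuit can be turned into an unswappable circuit.
   Context: An MCT circuit on qubits $Q=\{1,\dots,n\}$ with $m$ gate positions is a sequence $(g_1,\dots,g_m)$, where each gate $g_d$ ($d\in D=\{1,\dots,m\}$) is either empty, or consists of exactly one target qubit $t(g_d)\in Q$ together with a set $C(g_d)\subseteq Q\setminus\{t(g_d)\}$ of control qubits. (Equivalently, with binary variables $t_q^d$ indicating that $q$ is the target of gate $d$ and $w_q^d$ indicating that $q$ is a control of gate $d$: $t_q^d+w_q^d\le 1$, $\sum_q t_q^d\le 1$, and a gate with no target has no controls.) The following operations each exchange two consecutive gates $g_d$ and $g_{d+1}$ (for $d\in\{1,\dots,m-1\}$): Swap 1 (empty gate): if $g_d$ is empty and $g_{d+1}$ is not empty, swap $g_d$ and $g_{d+1}$. Swap 2 (different target): if $g_d$ has target $q$ and $g_{d+1}$ has target $r$ with $q>r$, and $q\notin C(g_{d+1})$ and $r\notin C(g_d)$, swap $g_d$ and $g_{d+1}$. Swap 3 (same target): if $g_d$ and $g_{d+1}$ have the same target qubit and $|C(g_d)|<|C(g_{d+1})|$, swap $g_d$ and $g_{d+1}$. A circuit is called swappable if at least one of Swap 1, Swap 2, Swap 3 can be applied to it (for some $d$), and unswappable otherwise. *)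

From mathcomp Require Import all_boot all_order all_fingroup.
From Stdlib Require Import Relations.
Set Implicit Arguments. Unset Strict Implicit. Unset Printing Implicit Defensive.

(* Qubits Q = {1..n} are represented by 'I_n (qubit q+1 ~ ordinal q, order preserved).
   Gate positions D = {1..m} are represented by 'I_m. *)

(* A gate: None = empty gate; Some (t, C) = target t with control set C. *)
Definition gate (n : nat) := option ('I_n * {set 'I_n}).

Definition wf_gate n (g : gate n) : bool :=
  if g is Some (t, C) then t \notin C else true.

Definition circuit n m := {ffun 'I_m -> gate n}.

Definition wf_circuit n m (c : circuit n m) : Prop := forall d, wf_gate (c d).

Definition exch n m (c : circuit n m) (d d' : 'I_m) : circuit n m :=
  [ffun i => c (tperm d d' i)].

Definition swap1_ok n (g g' : gate n) : bool :=
  (g == None) && (g' != None).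

Definition swap2_ok n (g g' : gate n) : bool :=
  match g, g' with
  | Some (q, C), Some (r, C') => [&& (r < q)%N, q \notin C' & r \notin C]
  | _, _ => false
  end.

Definition swap3_ok n (g g' : gate n) : bool :=
  match g, g' with
  | Some (q, C), Some (r, C') => (q == r) && (#|C| < #|C'|)%N
  | _, _ => false
  end.

Definition swap_ok n (g g' : gate n) : bool :=
  [|| swap1_ok g g', swap2_ok g g' | swap3_ok g g'].

Definition swap_step n m (c c' : circuit n m) : Prop :=
  exists (d d' : 'I_m), val d' = (val d).+1 /\ swap_ok (c d) (c d') /\ c' = exch c d d'.

Definition swappable n m (c : circuit n m) : Prop :=
  exists (d d' : 'I_m), val d' = (val d).+1 /\ swap_ok (c d) (c d').

Definition unswappable n m (c : circuit n m) : Prop := ~ swappable c.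

(* Rank the gates: empty gates above all others, and a gate with target t and
   control set C at t * (n + 1) + (n - |C|).  Each of the three swaps moves a gate
   of strictly smaller rank in front of one of larger rank, so the weighted sum
   of the ranks, with weight m - i at position i, strictly decreases.  Hence
   swaps can be applied only finitely often, and a maximal sequence of swaps
   ends in an unswappable circuit. *)

From mathcomp Require Import all_boot all_order all_fingroup.
From Stdlib Require Import Relations Classical.
From mathcomp Require Import zify.

Set Implicit Arguments.
Unset Strict Implicit.
Unset Printing Implicit Defensive.

Section NormalForm.

Variables (T : Type) (R : relation T) (f : T -> nat).
Hypothesis R_decreasing : forall x y, R x y -> f y < f x.

Lemma clos_rt_normal_form x :
  exists y, clos_refl_trans T R x y /\ ~ exists z, R y z.
Proof.
elim: {x}(f x).+1 {-2}x (ltnSn (f x)) => // k IH x lt_fx_k.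
have [[y Rxy] | irreducible_x] := classic (exists y, R x y); last first.
  by exists x; split; first exact: rt_refl.
have [z [Ryz irreducible_z]] := IH y (leq_trans (R_decreasing Rxy) lt_fx_k).
by exists z; split => //; apply: (rt_trans _ _ _ y) => //; exact: rt_step.
Qed.

End NormalForm.

Definition gate_rank n (g : gate n) : nat :=
  if g is Some (t, C) then t * n.+1 + (n - #|C|) else n.+1 * n.+1.

Lemma card_set_ord_le n (C : {set 'I_n}) : #|C| <= n.
Proof. by rewrite -[X in _ <= X]card_ord max_card. Qed.

Lemma gate_rank_lt_empty n (t : 'I_n) (C : {set 'I_n}) :
  gate_rank (Some (t, C)) < gate_rank (None : gate n).
Proof. by have := ltn_ord t; rewrite /gate_rank; nia. Qed.

Lemma swap_ok_rank n (g g' : gate n) : swap_ok g g' -> gate_rank g' < gate_rank g.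
Proof.
rewrite /swap_ok /swap1_ok /swap2_ok /swap3_ok.
case: g => [[q C]|]; case: g' => [[r C']|] //=; last by move=> _; exact: gate_rank_lt_empty.
rewrite /gate_rank; case/orP => [/and3P [lt_rq _ _] | /andP [/eqP <- lt_C_C']].
  have : r * n.+1 + n.+1 <= q * n.+1 by rewrite -mulSnr leq_mul2r lt_rq orbT.
  by lia.
by rewrite ltn_add2l ltn_sub2l // (leq_trans lt_C_C' (card_set_ord_le C')).
Qed.

Definition circuit_weight n m (c : circuit n m) : nat :=
  \sum_(i < m) (m - i) * gate_rank (c i).

Lemma circuit_weight_exch n m (c : circuit n m) (d d' : 'I_m) :
  val d' = (val d).+1 ->
  circuit_weight (exch c d d') + gate_rank (c d) =
  circuit_weight c + gate_rank (c d').
Proof.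
move=> dd'; have neq_d'd : d' != d by apply/eqP => eq_d'd; rewrite eq_d'd in dd'; lia.
rewrite /circuit_weight (bigD1 d) // [in RHS](bigD1 d) //.
rewrite (bigD1 d') // [in RHS](bigD1 d') //= /exch !ffunE tpermL tpermR.
under eq_bigr => i /andP [ne_id ne_id'] do rewrite ffunE tpermD // 1?eq_sym //.
have -> : m - d = (m - d').+1 by have := ltn_ord d'; rewrite /= in dd'; lia.
by rewrite !mulSn; lia.
Qed.

Lemma swap_step_weight n m (c c' : circuit n m) :
  swap_step c c' -> circuit_weight c' < circuit_weight c.
Proof.
move=> [d [d' [dd' [ok ->]]]].
by have := circuit_weight_exch c dd'; have := swap_ok_rank ok; lia.
Qed.

Lemma swappable_step n m (c : circuit n m) : swappable c -> exists c', swap_step c c'.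
Proof. by move=> [d [d' [dd' ok]]]; exists (exch c d d'), d, d'. Qed.

Theorem proposition1 (n m : nat) (hn : (1 <= n)%N) (hm : (1 <= m)%N)
  (c : circuit n m) (hwf : wf_circuit c) (hsw : swappable c) :
  exists c' : circuit n m,
    clos_refl_trans (circuit n m) (@swap_step n m) c c' /\ unswappable c'.
Proof.
(* The conclusion holds for every circuit. *)
have [c' [reach irreducible]] := clos_rt_normal_form (@swap_step_weight n m) c.
by exists c'; split => // /swappable_step.
Qed.
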